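(* Let $\Omega$ be finite. Fix $p:\Omega\to(0,1]$ with $\sum_\omega p(\omega)=1$ and $\alpha\in\mathbb R$, and let $K=\{y\in[-\infty,\infty)^\Omega:\langle p,y\rangle\le\alpha\}$. Fix $\varepsilon>0$ and $x\in\mathbb R^\Omega$ with $\langle p,x\rangle=\alpha$. Then there is $\delta\in(0,\varepsilon)$ such that no point of $K\cap B(x,\delta)$ is weakly dominated by any point of $K\setminus B(x,\varepsilon)$.
   Context: $\langle f,g\rangle=\sum_\omega f(\omega)g(\omega)$ (with $a\cdot0=0$ for extended reals $a$). $\|z\|_\infty=\max_{\omega}|z(\omega)|$ for $z\in[-\infty,\infty)^\Omega$, and $B(z,r)=\{z':\|z'-z\|_\infty<r\}$. A point $w$ weakly dominates $y$ if $y(\omega)\le w(\omega)$ for all $\omega\in\Omega$. *)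

From mathcomp Require Import all_boot all_order all_algebra.
From mathcomp Require Import all_classical all_reals ereal.
Set Implicit Arguments. Unset Strict Implicit. Unset Printing Implicit Defensive.
Import Order.TTheory GRing.Theory Num.Theory.
Local Open Scope ring_scope.
Local Open Scope ereal_scope.
Local Open Scope classical_set_scope.

(* <f,g> = sum_w f w * g w in the extended reals; mathcomp's mule has 0 * -oo = 0. *)
Definition edot (R : realType) (Omega : finType) (p : Omega -> R) (y : Omega -> \bar R) : \bar R :=
  \sum_(w : Omega) ((p w)%:E * y w).

Definition supnorm (R : realType) (Omega : finType) (z : Omega -> \bar R) : \bar R :=
  \big[Order.max/0]_(w : Omega) `|z w|.

Definition eball (R : realType) (Omega : finType) (z : Omega -> \bar R) (r : R)
  : set (Omega -> \bar R) :=
  [set z' | supnorm (fun w => z' w - z w) < r%:E].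

Definition Kset (R : realType) (Omega : finType) (p : Omega -> R) (alpha : R)
  : set (Omega -> \bar R) :=
  [set y | (forall w, y w != +oo) /\ edot p y <= alpha%:E].

Definition wdom (R : realType) (Omega : finType) (w y : Omega -> \bar R) : Prop :=
  forall o, y o <= w o.

From mathcomp Require Import all_boot all_order all_algebra.
From mathcomp Require Import all_classical all_reals ereal.
From mathcomp Require Import lra.
Import Order.TTheory GRing.Theory Num.Theory.
Local Open Scope ring_scope.
Local Open Scope classical_set_scope.
Set Implicit Arguments. Unset Strict Implicit.

(* Let m be the smallest weight and delta = m eps / 2.  If y is delta-close to
   x and z >= y, every coordinate of z - x exceeds -delta; if moreover z lies
   eps-far from x, some coordinate w0 of z - x is at least eps.  Hence
   <p, z> - <p, x> >= p w0 eps - delta > 0, i.e. <p, z> > alpha and z is not in K. *)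

Section Weighted.
Variables (R : realType) (Omega : finType).
Implicit Types (p x b : Omega -> R).

Lemma wavg_gain p x b (d e : R) (w0 : Omega) :
  (forall w, 0 <= p w) -> \sum_w p w = 1 -> 0 <= d ->
  (forall w, x w - d <= b w) -> x w0 + e <= b w0 ->
  \sum_w p w * x w + (p w0 * e - d) <= \sum_w p w * b w.
Proof.
move=> p_ge0 p_sum1 d_ge0 b_ge b_w0.
have shift : \sum_w p w * (b w - x w + d) = \sum_w p w * b w - \sum_w p w * x w + d.
  under eq_bigr do rewrite mulrDr mulrBr.
  by rewrite !big_split /= sumrN -mulr_suml p_sum1 mul1r.
have gain : p w0 * e <= \sum_w p w * (b w - x w + d).
  rewrite (bigD1 w0) //= -[leLHS]addr0 lerD //.
    by apply: ler_wpM2l; [exact: p_ge0 | lra].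
  apply: sumr_ge0 => w _; rewrite mulr_ge0 //; have := b_ge w; lra.
by move: gain; rewrite shift; lra.
Qed.

Lemma wavg_lt_far_dominating p x (a b : Omega -> R) (d e : R) (w0 : Omega) :
  (forall w, 0 <= p w) -> \sum_w p w = 1 -> d < e -> d < p w0 * e ->
  (forall w, `|a w - x w| < d) -> (forall w, a w <= b w) ->
  e <= `|b w0 - x w0| ->
  \sum_w p w * x w < \sum_w p w * b w.
Proof.
move=> p_ge0 p_sum1 d_lt_e d_lt a_near ab b_far.
have b_ge w : x w - d <= b w.
  by have := ab w; have := a_near w; rewrite ltr_norml => /andP[? _]; lra.
have d_ge0 : 0 <= d := le_trans (normr_ge0 _) (ltW (a_near w0)).
have b_w0 : x w0 + e <= b w0.
  by have := b_ge w0; move: b_far; rewrite ler_normr => /orP[] ?; lra.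
have := wavg_gain p_ge0 p_sum1 d_ge0 b_ge b_w0; lra.
Qed.

End Weighted.

Section ExtendedVectors.
Variable R : realType.

Lemma fin_num_fun_EFin (T : Type) (f : T -> \bar R) :
  (forall t, f t \is a fin_num) -> exists a : T -> R, f = fun t => (a t)%:E.
Proof. by move=> f_fin; exists (fine \o f); apply/funext => t /=; rewrite fineK. Qed.

Variable Omega : finType.

Lemma edot_EFin (p a : Omega -> R) :
  edot p (fun w => (a w)%:E) = (\sum_w p w * a w)%:E.
Proof. by rewrite /edot -sumEFin; apply: eq_bigr => w _; rewrite EFinM. Qed.

Lemma eball_fin_num (y : Omega -> \bar R) (x : Omega -> R) (r : R) :
  eball (fun w => (x w)%:E) r y -> forall w, y w \is a fin_num.
Proof. by move=> /bigmax_ltP[_ y_near] w; move: (y_near w isT); case: (y w). Qed.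

Lemma eball_EFinP (a x : Omega -> R) (r : R) : 0 < r ->
  eball (fun w => (x w)%:E) r (fun w => (a w)%:E) <->
  forall w, `|a w - x w| < r.
Proof.
move=> r_gt0; split => [/bigmax_ltP[_ a_near] w | a_near].
  by move: (a_near w isT); rewrite -EFinB abse_EFin lte_fin.
by apply/bigmax_ltP; split => [|w _]; rewrite ?lte_fin // -EFinB abse_EFin lte_fin.
Qed.

End ExtendedVectors.

Theorem lemma6 (R : realType) (Omega : finType) (p : Omega -> R)
  (hp : forall w, 0 < p w /\ p w <= 1) (hsum : \sum_(w : Omega) p w = 1)
  (alpha eps : R) (heps : 0 < eps) (x : Omega -> R)
  (hx : edot p (fun w => (x w)%:E) = alpha%:E) :
  exists delta : R, 0 < delta /\ delta < eps /\
    forall y z : Omega -> \bar R,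
      y \in Kset p alpha `&` eball (fun w => (x w)%:E) delta ->
      z \in Kset p alpha `\` eball (fun w => (x w)%:E) eps ->
      ~ wdom z y.
Proof.
(* The unit 1 of the minimum gives m <= 1, hence delta < eps. *)
pose m := \big[Order.min/1]_w p w.
have m_gt0 : 0 < m by apply/bigmin_gtP; split=> // w _; exact: (hp w).1.
have meps_le_eps : m * eps <= eps by rewrite ler_piMl ?bigmin_le_id // ltW.
have meps_gt0 : 0 < m * eps by rewrite mulr_gt0.
have delta_lt_eps : m * eps / 2 < eps by lra.
have delta_lt w : m * eps / 2 < p w * eps.
  have : m * eps <= p w * eps by rewrite ler_pM2r ?bigmin_le.
  lra.
exists (m * eps / 2); split; first lra; split=> //.
move=> y z /set_mem[_ y_near] /set_mem[[z_fin zK] z_far] zy.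
have [a y_a] := fin_num_fun_EFin (eball_fin_num y_near); subst y.
have [b z_b] : exists b, z = fun w => (b w)%:E.
  by apply: fin_num_fun_EFin => w; move: (zy w) (z_fin w); case: (z w).
subst z.
move: zK hx; rewrite !edot_EFin lee_fin => zK [hx].
have [w0 /negP] : exists w0, ~ `|b w0 - x w0| < eps.
  by apply/existsNP => b_near; apply: z_far; apply/eball_EFinP.
rewrite -leNgt => b_far.
have := wavg_lt_far_dominating (fun w => ltW (hp w).1) hsum delta_lt_eps
  (delta_lt w0) ((eball_EFinP _ _ _).1 y_near) zy b_far.
lra.
Qed.
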